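(* Let $U\colon[0,1]^2\to[0,1]$ be a uninorm with neutral element $e\in(0,1)$, $U\in\mathcal U$. If for some $x_1<x_2$ in $[0,1]$ both functions $u_{x_1}$ and $u_{x_2}$ are non-continuous at the same point $y\in[0,1]$, then $y$ is an idempotent element of $U$.
   Context: A uninorm is a commutative, associative binary operation on $[0,1]$, non-decreasing in each variable, with a neutral element $e$. Underlying t-norm $T_U(x,y)=U(ex,ey)/e$, underlying t-conorm $C_U(x,y)=(U(e+(1-e)x,e+(1-e)y)-e)/(1-e)$; $\mathcal U$ is the class of uninorms for which both are continuous. For $x\in[0,1]$, $u_x\colon[0,1]\to[0,1]$ is $u_x(z)=U(x,z)$. An idempotent element is $x$ with $U(x,x)=x$. *)

From Stdlib Require Import Reals Lra.
Open Scope R_scope.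

Definition in01 (x : R) : Prop := 0 <= x <= 1.

(* A uninorm on [0,1] with neutral element e, represented by a total
   function R -> R -> R whose behaviour is only constrained on [0,1]^2. *)
Definition uninorm (U : R -> R -> R) (e : R) : Prop :=
  in01 e /\
  (forall x y, in01 x -> in01 y -> in01 (U x y)) /\
  (forall x y, in01 x -> in01 y -> U x y = U y x) /\
  (forall x y z, in01 x -> in01 y -> in01 z -> U x (U y z) = U (U x y) z) /\
  (forall x x' y, in01 x -> in01 x' -> in01 y -> x <= x' -> U x y <= U x' y) /\
  (forall x, in01 x -> U e x = x).

Definition continuous_on_unit_square (f : R -> R -> R) : Prop :=
  forall x0 y0, in01 x0 -> in01 y0 ->
  forall eps, eps > 0 -> exists delta, delta > 0 /\
    forall x y, in01 x -> in01 y -> Rabs (x - x0) < delta -> Rabs (y - y0) < delta ->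
      Rabs (f x y - f x0 y0) < eps.

Definition continuous_at_in01 (f : R -> R) (y0 : R) : Prop :=
  forall eps, eps > 0 -> exists delta, delta > 0 /\
    forall z, in01 z -> Rabs (z - y0) < delta -> Rabs (f z - f y0) < eps.

Definition underlying_tnorm (U : R -> R -> R) (e : R) : R -> R -> R :=
  fun x y => U (e * x) (e * y) / e.

Definition underlying_tconorm (U : R -> R -> R) (e : R) : R -> R -> R :=
  fun x y => (U (e + (1 - e) * x) (e + (1 - e) * y) - e) / (1 - e).

Definition in_class_U (U : R -> R -> R) (e : R) : Prop :=
  continuous_on_unit_square (underlying_tnorm U e) /\
  continuous_on_unit_square (underlying_tconorm U e).

Definition u_ (U : R -> R -> R) (x : R) : R -> R := fun z => U x z.

Definition idempotent (U : R -> R -> R) (x : R) : Prop := U x x = x.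

From Stdlib Require Import Reals Lra.
Open Scope R_scope.

(* Continuity of the underlying t-norm and t-conorm makes every section [U a] with [a <= e]
   continuous on [[0,e]], hence onto [[0,a]], and dually above [e].  Consequently [u_p] is
   continuous wherever its values stay on one side of [e], so a discontinuity of [u_p] at [y]
   is a jump across [e]: [U p t < e] for [t < y] and [U p t > e] for [t > y].  The duality
   [U |-> 1 - U (1 - x) (1 - y)] reduces the theorem to [y < e].  There, if [U y y < y], the
   two discontinuities at [y] force [u_x1] and [u_x2] to agree below [y] and yield [t < y]
   with [y < m := U x1 t < e].  Writing [x2 = U x1 s0] with [s0 >= e], [m] is fixed by
   [U s0], hence so is [U x1 m], which lies in [(e, x1]]; fixed points of [U s0] above [e]
   propagate upwards, so [x2 = U s0 x1 = x1], a contradiction. *)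

Definition continuous_within (a b : R) (f : R -> R) (x0 : R) : Prop :=
  forall eps, eps > 0 -> exists delta, delta > 0 /\
    forall z, a <= z <= b -> Rabs (z - x0) < delta -> Rabs (f z - f x0) < eps.

Lemma continuous_at_in01_of_within f y : continuous_within 0 1 f y -> continuous_at_in01 f y.
Proof. exact (fun H => H). Qed.

Lemma continuous_within_sub a b c d f x0 :
  a <= c -> d <= b -> continuous_within a b f x0 -> continuous_within c d f x0.
Proof.
  intros Hac Hdb Hf eps Heps. destruct (Hf eps Heps) as [delta [Hdelta Hz]].
  exists delta; split; [exact Hdelta|]. intros z Hz' Hzx0. apply Hz; [lra|exact Hzx0].
Qed.

Lemma continuous_within_extend a b d f x0 :
  x0 < b -> continuous_within a b f x0 -> continuous_within a d f x0.
Proof.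
  intros Hx0 Hf eps Heps. destruct (Hf eps Heps) as [delta [Hdelta Hz]].
  exists (Rmin delta (b - x0)); split; [apply Rmin_glb_lt; lra|].
  intros z Hz' Hzx0.
  pose proof (Rmin_l delta (b - x0)). pose proof (Rmin_r delta (b - x0)).
  destruct (Rabs_def2 _ _ Hzx0).
  apply Hz; [lra|]. apply Rabs_def1; lra.
Qed.

Lemma continuous_within_right_point a b f x0 eps :
  a <= x0 < b -> eps > 0 -> continuous_within a b f x0 ->
  exists z, x0 < z <= b /\ Rabs (f z - f x0) < eps.
Proof.
  intros Hx0 Heps Hf. destruct (Hf eps Heps) as [delta [Hdelta Hz]].
  exists (Rmin b (x0 + delta / 2)).
  assert (Hmin : x0 < Rmin b (x0 + delta / 2) <= b /\ Rmin b (x0 + delta / 2) - x0 < delta)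
    by (unfold Rmin; destruct Rle_dec; lra).
  split; [lra|]. apply Hz; [lra|]. apply Rabs_def1; lra.
Qed.

Lemma continuous_within_left_point a b f x0 eps :
  a < x0 <= b -> eps > 0 -> continuous_within a b f x0 ->
  exists s, a <= s < x0 /\ Rabs (f s - f x0) < eps.
Proof.
  intros Hx0 Heps Hf. destruct (Hf eps Heps) as [delta [Hdelta Hs]].
  exists (Rmax a (x0 - delta / 2)).
  assert (Hmax : a <= Rmax a (x0 - delta / 2) < x0 /\ x0 - Rmax a (x0 - delta / 2) < delta)
    by (unfold Rmax; destruct Rle_dec; lra).
  split; [lra|]. apply Hs; [lra|]. apply Rabs_def1; lra.
Qed.

Lemma continuous_within_reflect a b f g x0 :
  (forall z, g z = 1 - f (1 - z)) ->
  continuous_within (1 - b) (1 - a) f (1 - x0) -> continuous_within a b g x0.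
Proof.
  intros Hg Hf eps Heps. destruct (Hf eps Heps) as [delta [Hdelta Hz]].
  exists delta; split; [exact Hdelta|]. intros z Hz' Hzx0.
  rewrite !Hg, <- Rabs_Ropp. replace (- (1 - f (1 - z) - (1 - f (1 - x0))))
    with (f (1 - z) - f (1 - x0)) by ring.
  apply Hz; [lra|]. rewrite <- Rabs_Ropp. replace (- (1 - z - (1 - x0))) with (z - x0) by ring.
  exact Hzx0.
Qed.

Definition clamp (a b x : R) : R := Rmin b (Rmax a x).

Lemma clamp_in a b x : a <= b -> a <= clamp a b x <= b.
Proof. intros; unfold clamp, Rmin, Rmax; repeat destruct Rle_dec; lra. Qed.

Lemma clamp_id a b x : a <= x <= b -> clamp a b x = x.
Proof. intros; unfold clamp, Rmin, Rmax; repeat destruct Rle_dec; lra. Qed.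

Lemma clamp_lipschitz a b x y : a <= b -> Rabs (clamp a b x - clamp a b y) <= Rabs (x - y).
Proof. intros; unfold clamp, Rmin, Rmax; repeat destruct Rle_dec; split_Rabs; lra. Qed.

(* Extending [f] constantly outside [a,b] turns it into an everywhere continuous function. *)
Lemma continuous_within_IVT a b f v :
  a <= b -> (forall x, a <= x <= b -> continuous_within a b f x) ->
  f a <= v <= f b -> exists c, a <= c <= b /\ f c = v.
Proof.
  intros Hab Hf Hv.
  set (g := fun x => f (clamp a b x) - v).
  assert (Hg : continuity g).
  { intros x0 eps Heps.
    destruct (Hf (clamp a b x0) (clamp_in a b x0 Hab) eps Heps) as [delta [Hdelta Hz]].
    exists delta; split; [exact Hdelta|]. intros x [_ Hx]; simpl in *; unfold R_dist in *.
    unfold g. replace (f (clamp a b x) - v - (f (clamp a b x0) - v))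
      with (f (clamp a b x) - f (clamp a b x0)) by ring.
    apply Hz; [apply clamp_in, Hab|].
    eapply Rle_lt_trans; [apply clamp_lipschitz, Hab|exact Hx]. }
  destruct (IVT_cor g a b Hg Hab) as [c [Hc Hgc]].
  { unfold g. rewrite !clamp_id by lra. nra. }
  exists c; split; [exact Hc|]. unfold g in Hgc. rewrite clamp_id in Hgc by exact Hc. lra.
Qed.

Lemma monotone_darboux_continuous a b f t :
  a <= t <= b ->
  (forall x x', a <= x -> x <= x' -> x' <= b -> f x <= f x') ->
  (forall v, f a <= v <= f b -> exists c, a <= c <= b /\ f c = v) ->
  continuous_within a b f t.
Proof.
  intros Ht Hmono Hdarboux eps Heps.
  assert (Hright : exists dr, dr > 0 /\
            forall x, t <= x <= b -> x - t < dr -> f x < f t + eps).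
  { destruct (Rle_dec (f t + eps / 2) (f b)) as [Hle|Hgt].
    - destruct (Hdarboux (f t + eps / 2)) as [c [Hc Hfc]].
      { assert (f a <= f t) by (apply Hmono; lra). lra. }
      assert (Htc : t < c).
      { destruct (Rlt_or_le t c) as [|Hct]; [assumption|].
        assert (f c <= f t) by (apply Hmono; lra). lra. }
      exists (c - t); split; [lra|]. intros x Hx Hxt.
      assert (f x <= f c) by (apply Hmono; lra). lra.
    - exists 1; split; [lra|]. intros x Hx _.
      assert (f x <= f b) by (apply Hmono; lra). lra. }
  assert (Hleft : exists dl, dl > 0 /\
            forall x, a <= x <= t -> t - x < dl -> f t - eps < f x).
  { destruct (Rle_dec (f a) (f t - eps / 2)) as [Hle|Hgt].
    - destruct (Hdarboux (f t - eps / 2)) as [c [Hc Hfc]].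
      { assert (f t <= f b) by (apply Hmono; lra). lra. }
      assert (Hct : c < t).
      { destruct (Rlt_or_le c t) as [|Htc]; [assumption|].
        assert (f t <= f c) by (apply Hmono; lra). lra. }
      exists (t - c); split; [lra|]. intros x Hx Hxt.
      assert (f c <= f x) by (apply Hmono; lra). lra.
    - exists 1; split; [lra|]. intros x Hx _.
      assert (f a <= f x) by (apply Hmono; lra). lra. }
  destruct Hright as [dr [Hdr Hr]], Hleft as [dl [Hdl Hl]].
  exists (Rmin dr dl); split; [apply Rmin_glb_lt; lra|].
  intros x Hx Hxt. destruct (Rabs_def2 _ _ Hxt).
  pose proof (Rmin_l dr dl). pose proof (Rmin_r dr dl).
  destruct (Rle_dec t x).
  - assert (f t <= f x) by (apply Hmono; lra). assert (f x < f t + eps) by (apply Hr; lra).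
    apply Rabs_def1; lra.
  - assert (f x <= f t) by (apply Hmono; lra). assert (f t - eps < f x) by (apply Hl; lra).
    apply Rabs_def1; lra.
Qed.

Section UninormLaws.

Variables (U : R -> R -> R) (e : R).
Hypothesis HU : uninorm U e.

Lemma uninorm_neutral_in01 : in01 e.
Proof. apply HU. Qed.

Lemma uninorm_in01 x y : in01 x -> in01 y -> in01 (U x y).
Proof. apply HU. Qed.

Lemma uninorm_comm x y : in01 x -> in01 y -> U x y = U y x.
Proof. apply HU. Qed.

Lemma uninorm_assoc x y z : in01 x -> in01 y -> in01 z -> U x (U y z) = U (U x y) z.
Proof. apply HU. Qed.

Lemma uninorm_monotone_l x x' y : in01 x -> in01 x' -> in01 y -> x <= x' -> U x y <= U x' y.
Proof. apply HU. Qed.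

Lemma uninorm_monotone_r x y y' : in01 x -> in01 y -> in01 y' -> y <= y' -> U x y <= U x y'.
Proof.
  intros Hx Hy Hy' Hyy'. rewrite !(uninorm_comm x) by assumption.
  now apply uninorm_monotone_l.
Qed.

Lemma uninorm_neutral_l x : in01 x -> U e x = x.
Proof. apply HU. Qed.

Lemma uninorm_neutral_r x : in01 x -> U x e = x.
Proof.
  intros Hx. rewrite uninorm_comm by (exact uninorm_neutral_in01 || exact Hx).
  now apply uninorm_neutral_l.
Qed.

Lemma uninorm_le_of_le_neutral x y : in01 x -> in01 y -> x <= e -> U x y <= y.
Proof.
  intros Hx Hy Hxe. rewrite <- (uninorm_neutral_l y Hy) at 2.
  apply uninorm_monotone_l; auto using uninorm_neutral_in01.
Qed.

Lemma uninorm_ge_of_ge_neutral x y : in01 x -> in01 y -> e <= x -> y <= U x y.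
Proof.
  intros Hx Hy Hex. rewrite <- (uninorm_neutral_l y Hy) at 1.
  apply uninorm_monotone_l; auto using uninorm_neutral_in01.
Qed.

End UninormLaws.

Lemma in01_one_minus x : in01 x -> in01 (1 - x).
Proof. unfold in01; lra. Qed.

Lemma one_minus_involutive x : 1 - (1 - x) = x.
Proof. ring. Qed.

Definition dual (U : R -> R -> R) : R -> R -> R := fun x y => 1 - U (1 - x) (1 - y).

Lemma dual_uninorm U e : uninorm U e -> uninorm (dual U) (1 - e).
Proof.
  intros HU. pose proof (uninorm_neutral_in01 U e HU) as He.
  unfold dual; split; [|split; [|split; [|split; [|split]]]].
  - now apply in01_one_minus.
  - intros x y Hx Hy.
    pose proof (uninorm_in01 U e HU _ _ (in01_one_minus x Hx) (in01_one_minus y Hy)).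
    unfold in01 in *; lra.
  - intros x y Hx Hy. now rewrite (uninorm_comm U e HU (1 - x)) by auto using in01_one_minus.
  - intros x y z Hx Hy Hz. rewrite !one_minus_involutive.
    now rewrite (uninorm_assoc U e HU (1 - x)) by auto using in01_one_minus.
  - intros x x' y Hx Hx' Hy Hxx'.
    assert (U (1 - x') (1 - y) <= U (1 - x) (1 - y))
      by (apply (uninorm_monotone_l U e HU); auto using in01_one_minus; lra).
    lra.
  - intros x Hx. rewrite one_minus_involutive, (uninorm_neutral_l U e HU)
      by auto using in01_one_minus.
    ring.
Qed.

Lemma continuous_at_in01_of_dual U x y :
  continuous_at_in01 (u_ (dual U) (1 - x)) (1 - y) -> continuous_at_in01 (u_ U x) y.
Proof.
  intros Hc. apply continuous_at_in01_of_within, continuous_within_reflect with (f := u_ (dual U) (1 - x)).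
  - intros z. unfold u_, dual. rewrite !one_minus_involutive. ring.
  - rewrite Rminus_0_r. replace (1 - 1) with 0 by ring. exact Hc.
Qed.

Definition lower_sections_continuous (U : R -> R -> R) (e : R) : Prop :=
  forall a w0, 0 <= a <= e -> 0 <= w0 <= e -> continuous_within 0 e (U a) w0.

Definition upper_sections_continuous (U : R -> R -> R) (e : R) : Prop :=
  forall a w0, e <= a <= 1 -> e <= w0 <= 1 -> continuous_within e 1 (U a) w0.

Lemma Rabs_div_pos z k : 0 < k -> Rabs (z / k) = Rabs z / k.
Proof.
  intros Hk. unfold Rdiv. rewrite Rabs_mult, Rabs_inv, (Rabs_pos_eq k) by lra. reflexivity.
Qed.

Lemma in01_rescale c d a : c < d -> c <= a <= d -> in01 ((a - c) / (d - c)).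
Proof.
  intros Hcd Ha. unfold in01, Rdiv.
  assert (0 < / (d - c)) by (apply Rinv_0_lt_compat; lra).
  split; [nra|]. replace 1 with ((d - c) * / (d - c)) by (field; lra). nra.
Qed.

Lemma rescale_inverse c d a : c < d -> c + (d - c) * ((a - c) / (d - c)) = a.
Proof. intros; field; lra. Qed.

Lemma sections_continuous_of_rescaled (F f : R -> R -> R) c d :
  c < d ->
  (forall x y, in01 x -> in01 y -> f x y = (F (c + (d - c) * x) (c + (d - c) * y) - c) / (d - c)) ->
  continuous_on_unit_square f ->
  forall a w0, c <= a <= d -> c <= w0 <= d -> continuous_within c d (F a) w0.
Proof.
  intros Hcd Hf Hsq a w0 Ha Hw0 eps Heps.
  set (r := fun w => (w - c) / (d - c)).
  destruct (Hsq (r a) (r w0) (in01_rescale c d a Hcd Ha) (in01_rescale c d w0 Hcd Hw0)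
              (eps / (d - c))) as [delta [Hdelta Hclose]].
  { apply Rlt_gt, Rdiv_lt_0_compat; lra. }
  exists (delta * (d - c)); split; [nra|].
  intros w Hw Hww0.
  assert (Hdiff : f (r a) (r w) - f (r a) (r w0) = (F a w - F a w0) / (d - c)).
  { unfold r. rewrite !Hf by (apply in01_rescale; lra).
    rewrite !rescale_inverse by exact Hcd. field; lra. }
  assert (Hr : Rabs (r w - r w0) < delta).
  { unfold r. replace ((w - c) / (d - c) - (w0 - c) / (d - c)) with ((w - w0) / (d - c))
      by (field; lra).
    rewrite Rabs_div_pos by lra.
    apply Rmult_lt_reg_r with (d - c); [lra|].
    unfold Rdiv. rewrite Rmult_assoc, Rinv_l, Rmult_1_r by lra. exact Hww0. }
  pose proof (Hclose (r a) (r w) (in01_rescale c d a Hcd Ha) (in01_rescale c d w Hcd Hw)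
                ltac:(rewrite Rminus_diag, Rabs_R0; lra) Hr) as Hlt.
  rewrite Hdiff, Rabs_div_pos in Hlt by lra.
  apply Rmult_lt_reg_r with (/ (d - c)); [apply Rinv_0_lt_compat; lra|]. exact Hlt.
Qed.

Lemma in_class_U_sections_continuous U e :
  0 < e < 1 -> in_class_U U e ->
  lower_sections_continuous U e /\ upper_sections_continuous U e.
Proof.
  intros He [Htnorm Htconorm]. split; intros a w0 Ha Hw0.
  - apply (sections_continuous_of_rescaled U (underlying_tnorm U e) 0 e); try lra.
    + intros x y _ _. unfold underlying_tnorm. now rewrite !Rminus_0_r, !Rplus_0_l.
    + exact Htnorm.
  - apply (sections_continuous_of_rescaled U (underlying_tconorm U e) e 1); try lra.
    + intros x y _ _. reflexivity.
    + exact Htconorm.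
Qed.

Lemma dual_lower_sections_continuous U e :
  upper_sections_continuous U e -> lower_sections_continuous (dual U) (1 - e).
Proof.
  intros HC a w0 Ha Hw0.
  apply continuous_within_reflect with (f := U (1 - a)); [reflexivity|].
  rewrite one_minus_involutive, Rminus_0_r. apply HC; lra.
Qed.

Lemma dual_upper_sections_continuous U e :
  lower_sections_continuous U e -> upper_sections_continuous (dual U) (1 - e).
Proof.
  intros HT a w0 Ha Hw0.
  apply continuous_within_reflect with (f := U (1 - a)); [reflexivity|].
  rewrite one_minus_involutive. replace (1 - 1) with 0 by ring. apply HT; lra.
Qed.

Section LowerHalf.

Variables (U : R -> R -> R) (e : R).
Hypothesis HU : uninorm U e.
Hypothesis HT : lower_sections_continuous U e.

Lemma lower_section_onto a v :
  0 <= a <= e -> 0 <= v <= a -> exists w, 0 <= w <= e /\ U a w = v.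
Proof.
  intros Ha Hv.
  assert (Ha01 : in01 a) by (pose proof (uninorm_neutral_in01 U e HU); unfold in01 in *; lra).
  apply continuous_within_IVT; [lra| |].
  - intros w0 Hw0. apply HT; assumption.
  - assert (in01 (U a 0)) by (apply (uninorm_in01 U e HU); unfold in01 in *; lra).
    assert (U a 0 <= 0)
      by (apply (uninorm_le_of_le_neutral U e HU); unfold in01 in *; lra).
    rewrite (uninorm_neutral_r U e HU a Ha01). unfold in01 in *; lra.
Qed.

(* [u_p] is monotone with the Darboux property on [[0,t0]]: a value [v <= U p t0 <= e] is
   [U (U p t0) w = U p (U t0 w)] for some [w] in [[0,e]]. *)
Lemma u_continuous_below p t0 ts :
  in01 p -> in01 t0 -> U p t0 <= e -> 0 <= ts < t0 -> continuous_at_in01 (u_ U p) ts.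
Proof.
  intros Hp Ht0 Hpt0 Hts.
  pose proof (uninorm_neutral_in01 U e HU) as He.
  apply continuous_at_in01_of_within, (continuous_within_extend 0 t0); [lra|].
  apply monotone_darboux_continuous; [lra| |].
  - intros x x' Hx Hxx' Hx'. apply (uninorm_monotone_r U e HU); unfold in01 in *; lra.
  - intros v Hv. unfold u_ in Hv.
    assert (in01 (U p 0)) by (apply (uninorm_in01 U e HU); unfold in01 in *; lra).
    assert (in01 (U p t0)) by (apply (uninorm_in01 U e HU); assumption).
    destruct (lower_section_onto (U p t0) v) as [w [Hw Hpw]]; [unfold in01 in *; lra..|].
    assert (Hw01 : in01 w) by (unfold in01 in *; lra).
    assert (in01 (U t0 w)) by (apply (uninorm_in01 U e HU); assumption).
    assert (U t0 w <= t0).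
    { rewrite (uninorm_comm U e HU) by assumption.
      apply (uninorm_le_of_le_neutral U e HU); unfold in01 in *; lra. }
    exists (U t0 w); split; [unfold in01 in *; lra|].
    unfold u_. rewrite (uninorm_assoc U e HU) by assumption. exact Hpw.
Qed.

End LowerHalf.

Lemma upper_section_onto U e a v :
  uninorm U e -> upper_sections_continuous U e ->
  e <= a <= 1 -> a <= v <= 1 -> exists s, e <= s <= 1 /\ U a s = v.
Proof.
  intros HU HC Ha Hv.
  destruct (lower_section_onto (dual U) (1 - e) (dual_uninorm U e HU)
              (dual_lower_sections_continuous U e HC) (1 - a) (1 - v)) as [w [Hw Hw']]; [lra..|].
  exists (1 - w); split; [lra|].
  unfold dual in Hw'. rewrite one_minus_involutive in Hw'. lra.
Qed.

Lemma u_continuous_above U e p t0 ts :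
  uninorm U e -> upper_sections_continuous U e ->
  in01 p -> in01 t0 -> e <= U p t0 -> t0 < ts <= 1 -> continuous_at_in01 (u_ U p) ts.
Proof.
  intros HU HC Hp Ht0 Hpt0 Hts.
  apply continuous_at_in01_of_dual, (u_continuous_below (dual U) (1 - e) (dual_uninorm U e HU)
    (dual_lower_sections_continuous U e HC) (1 - p) (1 - t0)); auto using in01_one_minus.
  - unfold dual. rewrite !one_minus_involutive. lra.
  - lra.
Qed.

Section Discontinuities.

Variables (U : R -> R -> R) (e : R).
Hypothesis HU : uninorm U e.
Hypothesis HT : lower_sections_continuous U e.
Hypothesis HC : upper_sections_continuous U e.

Lemma discontinuity_threshold p y :
  in01 p -> in01 y -> ~ continuous_at_in01 (u_ U p) y ->
  (forall t, in01 t -> y < t -> e < U p t) /\ (forall t, in01 t -> t < y -> U p t < e).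
Proof.
  intros Hp Hy Hdisc. split; intros t Ht Hty.
  - destruct (Rlt_or_le e (U p t)) as [|Hle]; [assumption|].
    exfalso. apply Hdisc, (u_continuous_below U e HU HT p t); unfold in01 in *; lra.
  - destruct (Rlt_or_le (U p t) e) as [|Hle]; [assumption|].
    exfalso. apply Hdisc, (u_continuous_above U e p t y HU HC); unfold in01 in *; lra.
Qed.

(* [r = U q s] for some [s] in [e,1], so [U s0 r = U (U s0 q) s = r]. *)
Lemma upper_fixed_point_upward s0 q r :
  in01 s0 -> e <= q -> q <= r <= 1 -> U s0 q = q -> U s0 r = r.
Proof.
  intros Hs0 Hq Hr Hfix.
  pose proof (uninorm_neutral_in01 U e HU) as He.
  destruct (upper_section_onto U e q r HU HC) as [s [Hs Hqs]]; [unfold in01 in *; lra..|].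
  subst r. rewrite (uninorm_assoc U e HU), Hfix by (unfold in01 in *; lra). reflexivity.
Qed.

Variables (p p' y : R).
Hypotheses (Hp : in01 p) (Hp' : in01 p') (Hy : in01 y) (Hpp' : p < p') (Hye : y < e).
Hypothesis Hdisc : ~ continuous_at_in01 (u_ U p) y.
Hypothesis Hdisc' : ~ continuous_at_in01 (u_ U p') y.

Let He : in01 e := uninorm_neutral_in01 U e HU.
Let Hclosed : forall x y, in01 x -> in01 y -> in01 (U x y) := uninorm_in01 U e HU.
Local Hint Resolve Hclosed : core.
Let Habove := proj1 (discontinuity_threshold p y Hp Hy Hdisc).
Let Hbelow := proj2 (discontinuity_threshold p y Hp Hy Hdisc).
Let Hbelow' := proj2 (discontinuity_threshold p' y Hp' Hy Hdisc').

(* Pick [w] with [U y w = (t1 + t2)/2]; continuity of [U w] at [y] gives [s < y < z] with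
   [t1 < U w s] and [U w z < t2], and then [U p' t1 <= U (U p' s) w <= w <= U (U p z) w <= U p t2]. *)
Lemma discontinuous_sections_cross t1 t2 :
  0 <= t1 -> t1 < t2 -> t2 < y -> U p' t1 <= U p t2.
Proof.
  intros Ht1 Ht12 Ht2y.
  assert (H01 : forall z, 0 <= z <= e -> in01 z) by (unfold in01 in *; intros; lra).
  destruct (lower_section_onto U e HU HT y ((t1 + t2) / 2)) as [w [Hw Hyw]]; [lra|lra|].
  assert (Hwy : U w y = (t1 + t2) / 2) by (rewrite (uninorm_comm U e HU); auto).
  assert (Hcont : continuous_within 0 e (U w) y) by (apply HT; lra).
  destruct (continuous_within_left_point 0 e (U w) y ((t2 - t1) / 2)) as [s [Hs Hws]];
    [lra|lra|exact Hcont|].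
  destruct (continuous_within_right_point 0 e (U w) y ((t2 - t1) / 2)) as [z [Hz Hwz]];
    [lra|lra|exact Hcont|].
  rewrite Hwy in Hws, Hwz. apply Rabs_def2 in Hws, Hwz.
  assert (Hs01 : in01 s) by (apply H01; lra). assert (Hz01 : in01 z) by (apply H01; lra).
  assert (Hw01 : in01 w) by (apply H01; lra).
  assert (Hlow : U p' t1 <= w).
  { apply Rle_trans with (U p' (U w s)).
    - apply (uninorm_monotone_r U e HU); [auto|apply H01; lra|auto|lra].
    - rewrite (uninorm_comm U e HU w s), (uninorm_assoc U e HU) by auto.
      apply (uninorm_le_of_le_neutral U e HU); auto.
      left; apply Hbelow'; auto; lra. }
  assert (Hhigh : w <= U p t2).
  { apply Rle_trans with (U p (U w z)).
    - rewrite (uninorm_comm U e HU w z), (uninorm_assoc U e HU) by auto.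
      apply (uninorm_ge_of_ge_neutral U e HU); auto.
      left; apply Habove; auto; lra.
    - apply (uninorm_monotone_r U e HU); [auto|auto|apply H01; lra|lra]. }
  lra.
Qed.

(* If [U p t < U p' t], then [u_p] is continuous at [t] (its values stay below [e] beyond [t]),
   contradicting [U p' t <= U p t2] for [t2] slightly larger than [t]. *)
Lemma discontinuous_sections_agree_below t : 0 <= t < y -> U p' t = U p t.
Proof.
  intros Ht.
  assert (Ht01 : in01 t) by (unfold in01 in *; lra).
  assert (Hmid01 : in01 ((t + y) / 2)) by (unfold in01 in *; lra).
  assert (Hle : U p t <= U p' t) by (apply (uninorm_monotone_l U e HU); auto; lra).
  destruct (Req_dec (U p' t) (U p t)) as [|Hne]; [assumption|exfalso].
  assert (Hcont : continuous_within 0 ((t + y) / 2) (u_ U p) t).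
  { apply (continuous_within_sub 0 1); [lra|unfold in01 in *; lra|].
    apply (u_continuous_below U e HU HT p ((t + y) / 2)); [assumption|assumption| |lra].
    left; apply Hbelow; [assumption|lra]. }
  destruct (continuous_within_right_point 0 ((t + y) / 2) (u_ U p) t (U p' t - U p t))
    as [t2 [Ht2 Hclose]]; [lra|lra|exact Hcont|].
  unfold u_ in Hclose. apply Rabs_def2 in Hclose.
  pose proof (discontinuous_sections_cross t t2 ltac:(lra) ltac:(lra) ltac:(lra)).
  lra.
Qed.

(* If [U y y < y], continuity of [U y] and [U w0] at [y] produce [y < w0] and [t < y] with
   [U w0 z < t] for some [z > y]; then [U p t >= U (U p z) w0 >= w0 > y]. *)
Lemma discontinuous_value_in_gap :
  U y y < y -> exists t, 0 <= t < y /\ y < U p t < e.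
Proof.
  intros Hyy.
  assert (H01 : forall z, 0 <= z <= e -> in01 z) by (unfold in01 in *; intros; lra).
  assert (Hyy01 : in01 (U y y)) by auto.
  destruct (continuous_within_right_point 0 e (U y) y (y - U y y)) as [w0 [Hw0 Hyw0]];
    [unfold in01 in *; lra|lra|apply HT; unfold in01 in *; lra|].
  apply Rabs_def2 in Hyw0.
  assert (Hw001 : in01 w0) by (apply H01; unfold in01 in *; lra).
  assert (Hyw001 : in01 (U y w0)) by auto.
  set (t := (U y w0 + y) / 2).
  assert (Ht : 0 <= t < y) by (unfold t, in01 in *; lra).
  assert (Ht01 : in01 t) by (unfold in01 in *; lra).
  destruct (continuous_within_right_point 0 e (U w0) y (t - U w0 y)) as [z [Hz Hw0z]];
    [unfold in01 in *; lra| |apply HT; unfold in01 in *; lra|].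
  { rewrite (uninorm_comm U e HU) by assumption. unfold t; lra. }
  apply Rabs_def2 in Hw0z.
  assert (Hz01 : in01 z) by (apply H01; lra).
  exists t; split; [exact Ht|split].
  - apply Rlt_le_trans with w0; [lra|].
    apply Rle_trans with (U p (U w0 z)).
    + rewrite (uninorm_comm U e HU w0 z), (uninorm_assoc U e HU) by auto.
      apply (uninorm_ge_of_ge_neutral U e HU); auto.
      left; apply Habove; auto; lra.
    + apply (uninorm_monotone_r U e HU); auto; lra.
  - apply Hbelow; [assumption|lra].
Qed.

(* With [U p s0 = p'] and [m = U p t] from the gap, [U s0 m = U p' t = m]; hence the element
   [U p m] of [(e, p]] is a fixed point of [U s0], and so is [p] above it: [p' = p]. *)
Lemma idempotent_of_discontinuous_below_neutral : U y y = y.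
Proof.
  destruct (Req_dec (U y y) y) as [|Hne]; [assumption|exfalso].
  assert (Hyy : U y y < y).
  { assert (U y y <= y) by (apply (uninorm_le_of_le_neutral U e HU); auto; lra). lra. }
  destruct (discontinuous_value_in_gap Hyy) as [t [Ht [Hym Hme]]].
  assert (Ht01 : in01 t) by (unfold in01 in *; lra).
  set (m := U p t) in *.
  assert (Hm01 : in01 m) by (unfold in01 in *; lra).
  assert (Hep : e < p) by (rewrite <- (uninorm_neutral_r U e HU p Hp); apply Habove; auto; lra).
  destruct (upper_section_onto U e p p' HU HC) as [s0 [Hs0 Hps0]]; [unfold in01 in *; lra..|].
  assert (Hs001 : in01 s0) by (unfold in01 in *; lra).
  assert (Hm_fixed : U s0 m = m).
  { unfold m. rewrite (uninorm_assoc U e HU), (uninorm_comm U e HU s0 p), Hps0 by assumption.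
    apply discontinuous_sections_agree_below; exact Ht. }
  assert (Hq_fixed : U s0 (U p m) = U p m).
  { rewrite (uninorm_comm U e HU p m), (uninorm_assoc U e HU), Hm_fixed by assumption.
    reflexivity. }
  assert (Hp_fixed : U s0 p = p).
  { apply upper_fixed_point_upward with (U p m); [assumption| | |exact Hq_fixed].
    - left; apply Habove; auto; lra.
    - split; [|unfold in01 in *; lra].
      rewrite (uninorm_comm U e HU) by assumption.
      apply (uninorm_le_of_le_neutral U e HU); auto; lra. }
  rewrite (uninorm_comm U e HU), Hps0 in Hp_fixed by assumption. lra.
Qed.

End Discontinuities.

Lemma idempotent_of_discontinuous_above_neutral U e x1 x2 y :
  uninorm U e -> lower_sections_continuous U e -> upper_sections_continuous U e ->
  in01 x1 -> in01 x2 -> in01 y -> x1 < x2 -> e < y ->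
  ~ continuous_at_in01 (u_ U x1) y -> ~ continuous_at_in01 (u_ U x2) y -> U y y = y.
Proof.
  intros HU HT HC Hx1 Hx2 Hy Hx12 Hey Hdisc1 Hdisc2.
  assert (Hdual : dual U (1 - y) (1 - y) = 1 - y).
  { apply (idempotent_of_discontinuous_below_neutral (dual U) (1 - e) (dual_uninorm U e HU)
      (dual_lower_sections_continuous U e HC) (dual_upper_sections_continuous U e HT)
      (1 - x2) (1 - x1)); auto using in01_one_minus; try lra.
    - contradict Hdisc2. now apply continuous_at_in01_of_dual.
    - contradict Hdisc1. now apply continuous_at_in01_of_dual. }
  unfold dual in Hdual. rewrite one_minus_involutive in Hdual. lra.
Qed.

Theorem proposition17 (U : R -> R -> R) (e : R) :
  uninorm U e -> 0 < e < 1 -> in_class_U U e ->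
  forall x1 x2 y, in01 x1 -> in01 x2 -> in01 y -> x1 < x2 ->
    ~ continuous_at_in01 (u_ U x1) y ->
    ~ continuous_at_in01 (u_ U x2) y ->
    idempotent U y.
Proof.
  intros HU He Hclass x1 x2 y Hx1 Hx2 Hy Hx12 Hdisc1 Hdisc2.
  destruct (in_class_U_sections_continuous U e He Hclass) as [HT HC].
  unfold idempotent.
  destruct (Rtotal_order y e) as [Hye | [-> | Hey]].
  - exact (idempotent_of_discontinuous_below_neutral U e HU HT HC x1 x2 y
             Hx1 Hx2 Hy Hx12 Hye Hdisc1 Hdisc2).
  - exact (uninorm_neutral_l U e HU e Hy).
  - exact (idempotent_of_discontinuous_above_neutral U e x1 x2 y HU HT HC
             Hx1 Hx2 Hy Hx12 Hey Hdisc1 Hdisc2).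
Qed.
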